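(* Let $\lambda>0$ and let $(u_n)\subset E_\lambda$ satisfy $\Psi_\lambda(u_n)=c_\lambda+o_n(1)$ and $$\|v\|_\lambda-\|u_n\|_\lambda\ge\int_{\mathbb{R}^N}f(u_n)(v-u_n)\,dx-\tau_n\|v-u_n\|_\lambda\quad\text{for all } v\in E_\lambda,$$ where $\tau_n\to0$. Then $(u_n)$ is bounded in $E_\lambda$.
   Context: $N\ge2$, $1^*=N/(N-1)$. $f$ satisfies: $(f_1)$ $f\in C(\mathbb{R})$; $(f_2)$ $f(s)=o(1)$ as $s\to0$; $(f_3)$ $|f(s)|\le c_1+c_2|s|^{p-1}$ for some $c_1,c_2>0$, $p\in(1,1^* )$; $(f_4)$ there is $\theta>1$ with $0<\theta F(s)\le f(s)s$ for $s\ne0$, $F(s)=\int_0^sf$; $(f_5)$ $f$ increasing. $V:\mathbb{R}^N\to\mathbb{R}$ satisfies $V\ge0$, $|\{V\le M_0\}|<\infty$ for some $M_0>0$, and $\Omega=\mathrm{int}(V^{-1}(\{0\}))\ne\emptyset$. $E_\lambda=\{u\in BV(\mathbb{R}^N):\int(1+\lambda V)|u|<\infty\}$, $\|u\|_\lambda=\int_{\mathbb{R}^N}|Du|+\int_{\mathbb{R}^N}(1+\lambda V(x))|u|\,dx$, $\Psi_\lambda(u)=\|u\|_\lambda-\int_{\mathbb{R}^N}F(u)\,dx$. $c_\lambda=\inf_{\gamma\in\Gamma_\lambda}\max_{t\in[0,1]}\Psi_\lambda(\gamma(t))$, $\Gamma_\lambda=\{\gamma\in C([0,1],E_\lambda):\gamma(0)=0,\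 \Psi_\lambda(\gamma(1))<0\}$. *)

From HB Require Import structures.
From mathcomp Require Import all_boot all_order all_algebra.
From mathcomp Require Import all_classical all_reals all_analysis.
Set Implicit Arguments. Unset Strict Implicit. Unset Printing Implicit Defensive.
Import Order.TTheory GRing.Theory Num.Theory.
Import numFieldNormedType.Exports.
Local Open Scope classical_set_scope.
Local Open Scope ring_scope.

Section defs.
Context {R : realType} (N : nat).

(* Points of R^N: rows 'rV[R]_N carry the normed/topological structure,
   N.-tuple R carries the (Borel) product sigma-algebra; rowt links them. *)
Definition rowt (x : N.-tuple R) : 'rV[R]_N := \row_i tnth x i.

Definition ebasis (i : 'I_N) : 'rV[R]_N := delta_mx 0 i.

Definition euclid (v : 'I_N -> R) : R := Num.sqrt (\sum_i v i ^+ 2).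

Definition is_lebesgue_RN (mu : {measure set (N.-tuple R) -> \bar R}) : Prop :=
  forall a b : N.-tuple R,
    mu [set x | forall i, tnth a i < tnth x i <= tnth b i] =
    (\prod_i Num.max 0 (tnth b i - tnth a i))%:E.

Definition C1c_field (phi : 'I_N -> 'rV[R]_N -> R) : Prop :=
  forall i, continuous (phi i) /\
    (forall j x, derivable (phi i) x (ebasis j)) /\
    (forall j, continuous (fun x => 'D_(ebasis j) (phi i) x)) /\
    compact (closure [set x | phi i x != 0]).

Definition divg (phi : 'I_N -> 'rV[R]_N -> R) (x : 'rV[R]_N) : R :=
  \sum_i 'D_(ebasis i) (phi i) x.

Variable mu : {measure set (N.-tuple R) -> \bar R}.

Definition TV (u : 'rV[R]_N -> R) : \bar R :=
  ereal_sup [set (\int[mu]_x ((u (rowt x) * divg phi (rowt x))%:E))%E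
            | phi in [set phi | C1c_field phi /\
                                forall x, euclid (fun i => phi i x) <= 1]].

Variables (V : 'rV[R]_N -> R) (lam : R).

Definition wL1 (u : 'rV[R]_N -> R) : \bar R :=
  (\int[mu]_x (((1 + lam * V (rowt x)) * `|u (rowt x)|)%:E))%E.

Definition in_E (u : 'rV[R]_N -> R) : Prop :=
  mu.-integrable setT (fun x => (u (rowt x))%:E) /\
  (TV u < +oo)%E /\ (wL1 u < +oo)%E.

Definition normE (u : 'rV[R]_N -> R) : R := fine (TV u + wL1 u)%E.

End defs.

Definition Fprim {R : realType} (f : R -> R) (s : R) : R :=
  if 0 <= s then Rintegral lebesgue_measure `[0, s]%classic f
  else - Rintegral lebesgue_measure `[s, 0]%classic f.

Section defs2.
Context {R : realType} (N : nat) (mu : {measure set (N.-tuple R) -> \bar R})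
  (V : 'rV[R]_N -> R) (lam : R) (f : R -> R).

Definition Psi (u : 'rV[R]_N -> R) : R :=
  normE mu V lam u - Rintegral mu setT (fun x => Fprim f (u (rowt x))).

Definition Gamma_path (gamma : R -> 'rV[R]_N -> R) : Prop :=
  (forall t, 0 <= t <= 1 -> in_E mu V lam (gamma t)) /\
  (forall t0, 0 <= t0 <= 1 -> forall e, 0 < e -> exists2 d, 0 < d &
     forall t, 0 <= t <= 1 -> `|t - t0| < d ->
       normE mu V lam (gamma t - gamma t0) < e) /\
  gamma 0 = (fun _ => 0) /\ Psi (gamma 1) < 0.

Definition c_lam : \bar R :=
  ereal_inf [set ereal_sup [set (Psi (gamma t))%:E | t in [set t | 0 <= t <= 1]]
            | gamma in Gamma_path].

End defs2.

From HB Require Import structures.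
From mathcomp Require Import all_boot all_order all_algebra.
From mathcomp Require Import all_classical all_reals all_analysis.
From mathcomp Require Import lra.
Set Implicit Arguments. Unset Strict Implicit. Unset Printing Implicit Defensive.
Import Order.TTheory GRing.Theory Num.Theory.
Import numFieldNormedType.Exports.
Local Open Scope classical_set_scope.
Local Open Scope ring_scope.

(* Testing the variational inequality with v = 2 u_n and v = 0, and using that
   the norm is even and positively homogeneous, gives
   (1 - tau_n) ||u_n|| <= \int f(u_n) u_n <= (1 + tau_n) ||u_n||.
   With the Ambrosetti-Rabinowitz condition theta F(s) <= f(s) s this yields
   theta Psi(u_n) >= theta ||u_n|| - \int f(u_n) u_n >= (theta - 1 - tau_n) ||u_n||,
   so ||u_n|| is eventually at most 2 theta (c_lambda + 1) / (theta - 1). *)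

Section ereal_scaling.
Context {R : realType}.
Local Open Scope ereal_scope.

Lemma ge0_muleBr (k : R) (y z : \bar R) : (0 <= k)%R ->
  k%:E * (y - z) = k%:E * y - k%:E * z.
Proof.
rewrite le_eqVlt => /predU1P[<-|k0]; first by rewrite !mul0e sube0.
have kyy : k%:E * +oo = +oo by rewrite gt0_muley ?lte_fin.
have kNyNy : k%:E * -oo = -oo by rewrite gt0_muleNy ?lte_fin.
case: y => [y| |]; case: z => [z| |] /=;
  rewrite ?kyy ?kNyNy -?EFinM -?EFinN -?EFinD ?kyy ?kNyNy ?mulrBr ?mulrN //=;
  by rewrite ?addeNy ?addNye ?addye ?addey ?kyy ?kNyNy.
Qed.

Lemma ge0_fineMl (k : R) (x : \bar R) : (0 <= k)%R -> fine (k%:E * x) = (k * fine x)%R.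
Proof.
rewrite le_eqVlt => /predU1P[<-|k0]; first by rewrite mul0e mul0r.
by case: x => [x| |] /=; rewrite ?gt0_muley ?gt0_muleNy ?lte_fin ?mulr0.
Qed.

(* Unconditional: in every infinite case both sides are 0. *)
Lemma fine_subeC (x y : \bar R) : fine (x - y)%E = (- fine (y - x)%E)%R.
Proof. by case: x => [x| |]; case: y => [y| |] //=; rewrite ?oppr0 // opprB. Qed.

End ereal_scaling.

(* The integrands below need not be measurable (TV integrates an arbitrary u),
   so the library's scaling and monotonicity lemmas, which assume measurability,
   do not apply. *)
Section integral_without_measurability.
Context d (T : measurableType d) (R : realType) (mu : {measure set T -> \bar R}).
Local Open Scope ereal_scope.
Import HBNNSimple.

Lemma ge0_le_integralT (f g : T -> \bar R) : (forall x, 0 <= f x) ->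
  (forall x, f x <= g x) -> \int[mu]_x f x <= \int[mu]_x g x.
Proof.
move=> f0 fg; have g0 x : 0 <= g x by exact: le_trans (fg x).
rewrite !ge0_integralTE //; apply: ereal_sup_le => _ [h hf <-].
by exists h => // x; exact: le_trans (hf x) (fg x).
Qed.

Let gt0_integralZl_le (f : T -> \bar R) (k : R) : (0 < k)%R -> (forall x, 0 <= f x) ->
  \int[mu]_x (k%:E * f x) <= k%:E * \int[mu]_x f x.
Proof.
move=> k0 f0; have kf0 x : 0 <= k%:E * f x by rewrite mule_ge0 // lee_fin ltW.
rewrite !ge0_integralTE //; apply: ge_ereal_sup => _ [h hkf <-].
have k'0 : (0 <= k^-1)%R by rewrite invr_ge0 ltW.
have -> : sintegral mu h = k%:E * sintegral mu (scale_nnsfun h k'0).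
  by rewrite sintegralrM muleA -EFinM divff ?gt_eqF ?mul1e.
rewrite lee_pmul2l ?lte_fin //; apply: ereal_sup_ubound.
exists (scale_nnsfun h k'0) => // x /=.
by rewrite EFinM lee_pdivrMl ?lte_fin // hkf.
Qed.

Lemma ge0_integralZlT (f : T -> \bar R) (k : R) : (0 <= k)%R -> (forall x, 0 <= f x) ->
  \int[mu]_x (k%:E * f x) = k%:E * \int[mu]_x f x.
Proof.
rewrite le_eqVlt => /predU1P[<-|k0] f0.
  by under eq_integral do rewrite mul0e; rewrite integral0 mul0e.
apply/eqP; rewrite eq_le gt0_integralZl_le //=.
have k'0 : (0 < k^-1)%R by rewrite invr_gt0.
have kf0 x : 0 <= k%:E * f x by rewrite mule_ge0 // lee_fin ltW.
rewrite -(@lee_pmul2l _ k^-1%:E) ?lte_fin // muleA -EFinM mulVf ?gt_eqF // mul1e.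
rewrite [leLHS](eq_integral (fun x => k^-1%:E * (k%:E * f x))).
  exact: gt0_integralZl_le.
by move=> x _; rewrite muleA -EFinM mulVf ?gt_eqF // mul1e.
Qed.

Lemma integralZlT (f : T -> \bar R) (k : R) : (0 <= k)%R ->
  \int[mu]_x (k%:E * f x) = k%:E * \int[mu]_x f x.
Proof.
move=> k0; rewrite integralE [in RHS]integralE ge0_funeposM // ge0_funenegM //.
by rewrite !ge0_integralZlT // [RHS]ge0_muleBr.
Qed.

Lemma RintegralZlT (F : T -> R) (k : R) : (0 <= k)%R ->
  Rintegral mu setT (fun x => k * F x)%R = (k * Rintegral mu setT F)%R.
Proof.
move=> k0; rewrite /Rintegral; under eq_integral do rewrite EFinM.
by rewrite integralZlT // ge0_fineMl.
Qed.

Lemma ge0_le_RintegralT (F G : T -> R) : (forall x, 0 <= F x)%R ->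
  (forall x, F x <= G x)%R -> \int[mu]_x (G x)%:E \is a fin_num ->
  (Rintegral mu setT F <= Rintegral mu setT G)%R.
Proof.
move=> F0 FG Gfin.
have FleG : \int[mu]_x (F x)%:E <= \int[mu]_x (G x)%:E.
  by apply: ge0_le_integralT => x; rewrite lee_fin.
have F0' : 0 <= \int[mu]_x (F x)%:E by apply: integral_ge0 => x _; rewrite lee_fin.
apply: fine_le => //; rewrite ge0_fin_numE //.
by apply: le_lt_trans FleG _; rewrite ltey_eq Gfin.
Qed.

Lemma RintegralN (D : set T) (g : T -> R) :
  Rintegral mu D (fun x => - g x)%R = (- Rintegral mu D g)%R.
Proof.
rewrite /Rintegral; under eq_integral do rewrite EFinN.
by rewrite integralE [in RHS]integralE funeposN funenegN fine_subeC.
Qed.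

End integral_without_measurability.

Section total_variation.
Context {R : realType} (N : nat) (mu : {measure set (N.-tuple R) -> \bar R}).
Local Open Scope ereal_scope.
Implicit Types (u : 'rV[R]_N -> R) (phi : 'I_N -> 'rV[R]_N -> R).

Lemma C1c_field0 : C1c_field (fun (_ : 'I_N) (_ : 'rV[R]_N) => 0%R : R).
Proof.
move=> i; split; first exact: cst_continuous.
split; first by move=> j x; exact: derivable_cst.
split; first by move=> j; under eq_fun do rewrite derive_cst; exact: cst_continuous.
have -> : [set x : 'rV[R]_N | (0%R : R) != 0%R] = set0.
  by apply/seteqP; split => x /=; rewrite eqxx.
by rewrite closure0; exact: compact0.
Qed.

Lemma C1c_fieldN phi : C1c_field phi -> C1c_field (fun i x => - phi i x)%R.
Proof.
move=> C1phi i; have [phic [phid [dphic phis]]] := C1phi i.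
split; first by move=> x; exact: (cvgN (phic x)).
split; first by move=> j x; exact: (derivableN (phid j x)).
split.
  move=> j; under eq_fun do rewrite (deriveN (phid j _)).
  by move=> x; exact: (cvgN (dphic j x)).
by under eq_set do rewrite oppr_eq0.
Qed.

Lemma divgN phi x : C1c_field phi -> divg (fun i x => - phi i x)%R x = (- divg phi x)%R.
Proof.
move=> C1phi; rewrite /divg -sumrN; apply: eq_bigr => i _.
by have [_ [phid _]] := C1phi i; exact: (deriveN (phid i x)).
Qed.

Lemma TV_ge0 u : 0 <= TV mu u.
Proof.
apply: le_ereal_sup_tmp; exists 0 => //; exists (fun _ _ => 0%R).
  split; first exact: C1c_field0.
  by move=> x; rewrite /euclid big1 ?sqrtr0 // => i _; rewrite expr0n.
rewrite -(integral0 mu setT); apply: eq_integral => x _.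
by rewrite /divg big1 ?mulr0 // => i _; exact: derive_cst.
Qed.

Lemma TV0 : TV mu (0 : _ -> R)%R = 0.
Proof.
apply/eqP; rewrite eq_le TV_ge0 andbT; apply: ge_ereal_sup => _ [phi _ <-].
by under eq_integral do rewrite mul0r; rewrite integral0.
Qed.

Let TV_opp_le u : TV mu (- u)%R <= TV mu u.
Proof.
apply: ge_ereal_sup => _ [phi [C1phi phi1] <-].
apply: ereal_sup_ubound; exists (fun i x => - phi i x)%R.
  split; first exact: C1c_fieldN.
  by move=> x; rewrite /euclid; under eq_bigr do rewrite sqrrN; exact: phi1.
by apply: eq_integral => x _; rewrite divgN // opprfctE mulrN mulNr.
Qed.

Lemma TV_opp u : TV mu (- u)%R = TV mu u.
Proof.
by apply: le_anti; rewrite TV_opp_le /=; have := TV_opp_le (- u)%R; rewrite opprK.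
Qed.

Let TV_scale_le (k : R) u : (0 < k)%R -> TV mu (k *: u)%R <= k%:E * TV mu u.
Proof.
move=> k0; apply: ge_ereal_sup => _ [phi phiP <-].
under eq_integral do rewrite scalrfctE -mulrA EFinM.
rewrite integralZlT ?(ltW k0) // lee_pmul2l ?lte_fin //.
by apply: ereal_sup_ubound; exists phi.
Qed.

Lemma TV_scale (k : R) u : (0 <= k)%R -> TV mu (k *: u)%R = k%:E * TV mu u.
Proof.
rewrite le_eqVlt => /predU1P[<-|k0]; first by rewrite scale0r TV0 mul0e.
apply/eqP; rewrite eq_le TV_scale_le //=.
have k'0 : (0 < k^-1)%R by rewrite invr_gt0.
rewrite -(@lee_pmul2l _ k^-1%:E) ?lte_fin // muleA -EFinM mulVf ?gt_eqF // mul1e.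
by have := TV_scale_le (k *: u)%R k'0; rewrite scalerA mulVf ?lt0r_neq0 // scale1r.
Qed.

End total_variation.

Section weighted_norm.
Context {R : realType} (N : nat) (mu : {measure set (N.-tuple R) -> \bar R})
  (V : 'rV[R]_N -> R) (lam : R).
Local Open Scope ereal_scope.
Implicit Types u : 'rV[R]_N -> R.

Lemma wL1_opp u : wL1 mu V lam (- u)%R = wL1 mu V lam u.
Proof. by apply: eq_integral => x _; rewrite opprfctE normrN. Qed.

Lemma wL1_scale (k : R) u : (0 <= k)%R -> wL1 mu V lam (k *: u)%R = k%:E * wL1 mu V lam u.
Proof.
move=> k0; rewrite /wL1 -integralZlT //; apply: eq_integral => x _.
by rewrite scalrfctE normrM ger0_norm // mulrCA.
Qed.

Lemma wL1_0 : wL1 mu V lam (0 : _ -> R)%R = 0.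
Proof. by rewrite /wL1; under eq_integral do rewrite normr0 mulr0; rewrite integral0. Qed.

Lemma normE_opp u : normE mu V lam (- u)%R = normE mu V lam u.
Proof. by rewrite /normE TV_opp wL1_opp. Qed.

Lemma normE0 : normE mu V lam (0 : _ -> R)%R = 0%R.
Proof. by rewrite /normE TV0 wL1_0 adde0. Qed.

Lemma in_E0 : in_E mu V lam (0 : _ -> R)%R.
Proof. by split; [exact: integrable0|rewrite TV0 wL1_0]. Qed.

Lemma in_E_scale (k : R) u : (0 <= k)%R -> in_E mu V lam u -> in_E mu V lam (k *: u)%R.
Proof.
move=> k0 [uint [TVu wL1u]]; split.
  under eq_fun do rewrite scalrfctE EFinM.
  exact: integrableZl.
by rewrite TV_scale // wL1_scale // !lte_mul_pinfty // lee_fin.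
Qed.

Hypothesis weight_ge0 : forall y, (0 <= 1 + lam * V y)%R.

Lemma wL1_ge0 u : 0 <= wL1 mu V lam u.
Proof. by apply: integral_ge0 => x _; rewrite lee_fin mulr_ge0. Qed.

Lemma normE_ge0 u : (0 <= normE mu V lam u)%R.
Proof. by apply/fine_ge0/adde_ge0; [exact: TV_ge0|exact: wL1_ge0]. Qed.

Lemma normE_scale (k : R) u : (0 <= k)%R ->
  normE mu V lam (k *: u)%R = (k * normE mu V lam u)%R.
Proof.
move=> k0; rewrite /normE TV_scale // wL1_scale // -ge0_muleDr ?ge0_fineMl //.
  exact: TV_ge0.
exact: wL1_ge0.
Qed.

End weighted_norm.

Lemma Fprim0 {R : realType} (f : R -> R) : Fprim f 0 = 0.
Proof. by rewrite /Fprim lexx set_itv1 Rintegral_set1. Qed.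

Section Ambrosetti_Rabinowitz.
Context {R : realType} (f : R -> R) (th : R).
Hypothesis th_gt0 : 0 < th.
Hypothesis AR : forall s, s != 0 -> 0 < th * Fprim f s <= f s * s.

Lemma mul_f_id_ge0 s : 0 <= f s * s.
Proof.
have [->|/AR/andP[/ltW F0 Ff]] := eqVneq s 0; first by rewrite mulr0.
exact: le_trans Ff.
Qed.

Lemma Fprim_ge0 s : 0 <= Fprim f s.
Proof.
have [->|/AR/andP[F0 _]] := eqVneq s 0; first by rewrite Fprim0.
by rewrite -(pmulr_rge0 _ th_gt0) ltW.
Qed.

Lemma mulr_Fprim_le s : th * Fprim f s <= f s * s.
Proof. by have [->|/AR/andP[]//] := eqVneq s 0; rewrite Fprim0 !mulr0. Qed.

Lemma Rintegral_Fprim_le d (T : measurableType d) (mu : {measure set T -> \bar R})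
  (g : T -> R) : (\int[mu]_x (f (g x) * g x)%:E \is a fin_num)%E ->
  th * Rintegral mu setT (fun x => Fprim f (g x)) <=
    Rintegral mu setT (fun x => f (g x) * g x).
Proof.
move=> fin; rewrite -RintegralZlT ?(ltW th_gt0) //; apply: ge0_le_RintegralT => // x.
  by rewrite mulr_ge0 ?Fprim_ge0 // ltW.
exact: mulr_Fprim_le.
Qed.

End Ambrosetti_Rabinowitz.

Section variational_estimate.
Context {R : realType} (N : nat) (mu : {measure set (N.-tuple R) -> \bar R})
  (V : 'rV[R]_N -> R) (lam : R) (f : R -> R).
Hypothesis weight_ge0 : forall y, 0 <= 1 + lam * V y.
Variables (u : 'rV[R]_N -> R) (t : R).
Hypothesis uE : in_E mu V lam u.
Hypothesis u_variational : forall v, in_E mu V lam v ->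
  normE mu V lam v - normE mu V lam u >=
    Rintegral mu setT (fun x => f (u (rowt x)) * (v (rowt x) - u (rowt x)))
    - t * normE mu V lam (v - u).

Let A := Rintegral mu setT (fun x => f (u (rowt x)) * u (rowt x)).

Lemma variational_Rintegral_le : A <= (1 + t) * normE mu V lam u.
Proof.
have := u_variational (in_E_scale (ler0n _ 2) uE).
rewrite -[X in Rintegral _ _ X]/(fun x => f (u (rowt x)) * (2 *: u - u) (rowt x)).
have -> : 2 *: u - u = u by rewrite scaler_nat mulr2n addrK.
rewrite normE_scale ?ler0n // -/A; nra.
Qed.

Lemma variational_Rintegral_ge : (1 - t) * normE mu V lam u <= A.
Proof.
have := u_variational (in_E0 mu V lam).
rewrite -[X in Rintegral _ _ X]/(fun x => f (u (rowt x)) * (0 - u) (rowt x)) sub0r.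
under eq_Rintegral do rewrite opprfctE mulrN.
rewrite RintegralN normE0 normE_opp -/A; nra.
Qed.

Lemma variational_normE_le (th : R) : 0 < th ->
  (forall s, s != 0 -> 0 < th * Fprim f s <= f s * s) -> t < 1 ->
  (th - 1 - t) * normE mu V lam u <= th * Num.max (Psi mu V lam f u) 0.
Proof.
move=> th0 AR t1; have Ale := variational_Rintegral_le.
have Age := variational_Rintegral_ge; have a0 := normE_ge0 mu weight_ge0 u.
have [fin|inf] := boolP (\int[mu]_x (f (u (rowt x)) * u (rowt x))%:E \is a fin_num)%E.
  have := Rintegral_Fprim_le th0 AR fin; rewrite -/A => thB.
  apply: le_trans (_ : _ <= th * Psi mu V lam f u) _; first by rewrite /Psi; nra.
  by rewrite ler_pM2l // le_max lexx.
(* Otherwise [A] is the junk value 0, and the lower bound forces [normE u = 0]. *)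
have A0 : A = 0.
  move: inf; rewrite ge0_fin_numE; last first.
    by apply: integral_ge0 => x _; rewrite lee_fin (mul_f_id_ge0 AR).
  by rewrite -leNgt leye_eq /A /Rintegral => /eqP ->.
have -> : normE mu V lam u = 0 by apply/le_anti; rewrite a0 andbT; nra.
by rewrite mulr0 mulr_ge0 ?(ltW th0) // le_max lexx orbT.
Qed.

End variational_estimate.

Lemma near_ubound_seq {R : realType} (x : nat -> R) (K : R) :
  (\forall n \near \oo, x n <= K) -> exists M, forall n, x n <= M.
Proof.
move=> [n0 _ xK]; exists (\big[Num.max/K]_(i < n0) x i) => n.
have [nn0|n0n] := ltnP n n0; first exact: (le_bigmax _ (fun i : 'I_n0 => x i) (Ordinal nn0)).
exact: le_trans (xK n n0n) (bigmax_ge_id _ _ _ _).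
Qed.

Theorem lemma3p3 (R : realType) (N : nat) (hN : (2 <= N)%N)
  (mu : {measure set (N.-tuple R) -> \bar R}) (hmu : is_lebesgue_RN mu)
  (f : R -> R) (c1 c2 p : R)
  (f1 : continuous f)
  (f2 : f s @[s --> 0] --> 0)
  (hc1 : 0 < c1) (hc2 : 0 < c2) (hp1 : 1 < p) (hp2 : p < N%:R / (N%:R - 1))
  (f3 : forall s, `|f s| <= c1 + c2 * `|s| `^ (p - 1))
  (f4 : exists2 theta, 1 < theta &
          forall s, s != 0 -> 0 < theta * Fprim f s <= f s * s)
  (f5 : {homo f : x y / x < y})
  (V : 'rV[R]_N -> R) (M0 : R)
  (hVmeas : measurable_fun setT (fun x => V (rowt x)))
  (hV0 : forall x, 0 <= V x) (hM0 : 0 < M0)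
  (hVM0 : (mu [set x | (V (rowt x) <= M0)%R] < +oo)%E)
  (hOmega : interior (V @^-1` [set 0]) !=set0)
  (lam : R) (hlam : 0 < lam)
  (u : nat -> 'rV[R]_N -> R) (tau : nat -> R)
  (huE : forall n, in_E mu V lam (u n))
  (hcfin : c_lam mu V lam f \is a fin_num)
  (hPsi : Psi mu V lam f (u n) @[n --> \oo] --> fine (c_lam mu V lam f))
  (htau : tau n @[n --> \oo] --> 0)
  (hineq : forall n v, in_E mu V lam v ->
     normE mu V lam v - normE mu V lam (u n) >=
       Rintegral mu setT (fun x => f (u n (rowt x)) * (v (rowt x) - u n (rowt x)))
       - tau n * normE mu V lam (v - u n)) :
  exists M : R, forall n, normE mu V lam (u n) <= M.
Proof.
have [th th1 AR] := f4; have th0 : 0 < th := lt_trans ltr01 th1.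
have weight_ge0 y : 0 <= 1 + lam * V y by rewrite addr_ge0 // mulr_ge0 // ltW.
set c := fine (c_lam mu V lam f).
pose del := Num.min ((th - 1) / 2) 1.
have del_gt0 : 0 < del by rewrite lt_min ltr01 andbT divr_gt0 // subr_gt0.
apply: (@near_ubound_seq _ _ (2 * th * Num.max (c + 1) 0 / (th - 1))).
have c_lt : c < c + 1 by rewrite ltrDl.
have Psi_lt := cvgr_lt _ hPsi _ c_lt.
have tau_lt := cvgr_lt _ htau _ del_gt0.
near=> n.
have /andP[tau_th tau1] : (tau n < (th - 1) / 2) && (tau n < 1).
  by rewrite -lt_min; near: n; exact: tau_lt.
have := variational_normE_le weight_ge0 (huE n) (hineq n) th0 AR tau1.
have : Num.max (Psi mu V lam f (u n)) 0 <= Num.max (c + 1) 0.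
  by apply: le_max2 => //; apply: ltW; near: n; exact: Psi_lt.
have a0 := normE_ge0 mu weight_ge0 (u n).
rewrite ler_pdivlMr ?subr_gt0 //; nra.
Unshelve. all: by end_near.
Qed.
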